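(* Let $Q$ be a polyhedral partially ordered abelian group and $D\subseteq Q$ a downset. Then $D=\bigcup_\tau P_\tau(D)$, the union over all faces $\tau$ of $Q_+$ for which $\Gamma_\tau(D_\tau)$ is nonempty, and this is a primary decomposition of $D$ (each $P_\tau(D)$ is a coprimary downset).
   Context: A partially ordered abelian group is an abelian group $Q$ generated by a submonoid $Q_+$ (positive cone) whose only unit is $0$; $q\preceq q'$ iff $q'-q\in Q_+$. A face is a submonoid $\sigma\subseteq Q_+$ such that $Q_+\setminus\sigma$ is an ideal of the monoid $Q_+$; $Q$ is polyhedral if there are finitely many faces. A downset is a subset $D\subseteq Q$ with $D-Q_+=D$. For a face $\tau$: $D_\tau=\{q\in D: q+\tau\subseteq D\}$; $q\in D$ is globally supported on $\tau$ if $q\notin D_{\tau'}$ for all faces $\tau'\not\subseteq\tau$, and $\Gamma_\tau D$ is the set of such $q$; the local $\tau$-support is $\Gamma_\tau(D_\tau)$ (elements of $D_\tau$ globally supported on $\tau$ within the downset $D_\tau$); the $\tau$-primary component is the downset $P_\tau(D)=\Gamma_\tau(D_\tau)-Q_+$. A downset $D$ is coprimary ($\tau$-coprimary) if $D=P_\tau(D)$ for some face $\tau$. A primary decomposition of $D$ is an expression $D=\bigcup_{i=1}^r D_i$ with each $D_i$ a coprimary downset. *)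

From mathcomp Require Import all_boot all_algebra.
From mathcomp Require Import boolp classical_sets cardinality.
Set Implicit Arguments. Unset Strict Implicit. Unset Printing Implicit Defensive.
Import GRing.Theory.
Local Open Scope ring_scope.
Local Open Scope classical_set_scope.

Section PosetGroup.
Variable Q : zmodType.

Definition submonoid (S : set Q) : Prop :=
  S 0 /\ forall a b, S a -> S b -> S (a + b).

Definition positive_cone (Qp : set Q) : Prop :=
  [/\ submonoid Qp,
      (forall a, Qp a -> Qp (- a) -> a = 0) &
      (forall q, exists a b, [/\ Qp a, Qp b & q = a - b])].

Definition monoid_ideal (Qp I : set Q) : Prop :=
  I `<=` Qp /\ forall a b, I a -> Qp b -> I (a + b).

Definition face (Qp sigma : set Q) : Prop :=
  [/\ submonoid sigma, sigma `<=` Qp & monoid_ideal Qp (Qp `\` sigma)].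

Definition polyhedral (Qp : set Q) : Prop :=
  finite_set [set sigma : set Q | face Qp sigma].

Definition minus_cone (Qp D : set Q) : set Q :=
  [set q | exists x a, [/\ D x, Qp a & q = x - a]].

Definition downset (Qp D : set Q) : Prop := minus_cone Qp D = D.

Definition Dface (tau D : set Q) : set Q :=
  [set q | D q /\ forall t, tau t -> D (q + t)].

Definition Gamma (Qp tau D : set Q) : set Q :=
  [set q | D q /\ forall tau', face Qp tau' -> ~ (tau' `<=` tau) ->
                               ~ Dface tau' D q].

Definition primary_comp (Qp tau D : set Q) : set Q :=
  minus_cone Qp (Gamma Qp tau (Dface tau D)).

Definition coprimary (Qp D : set Q) : Prop :=
  downset Qp D /\ exists tau, face Qp tau /\ D = primary_comp Qp tau D.

End PosetGroup.

From mathcomp Require Import all_boot all_algebra.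
From mathcomp Require Import boolp classical_sets cardinality.
Set Implicit Arguments.
Unset Strict Implicit.
Unset Printing Implicit Defensive.

Import GRing.Theory.
Local Open Scope classical_set_scope.

(* For q in D, choose a face tau maximal among the faces sigma with
   q + sigma in D; it exists because {0} is such a face and there are only
   finitely many faces. Then q is globally supported on tau inside D_tau: if
   q + tau' lies in D_tau, then q + sigma lies in D for the face sigma of
   elements of Q_+ below t + s (t in tau, s in tau'), so tau' is contained in
   sigma = tau by maximality. Hence q lies in P_tau(D).

   For coprimarity, Gamma_tau(D_tau) is stable under translation by tau, so it
   lies in the tau-part of E = P_tau(D); being globally supported on tau
   passes from D_tau to the smaller set E_tau, whence P_tau(E) = E. *)

Lemma seq_ex_maximal (T : Type) (A : set T) (s : seq (set T)) :
  exists2 B, B \in A :: s & forall C, C \in A :: s -> B `<=` C -> C `<=` B.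
Proof.
elim: s A => [|A' s IH] A.
  by exists A => [|C]; rewrite ?mem_head // inE => /eqP->.
have [B Bs Bmax] := IH A'.
have [BA|nBA] := pselect (B `<=` A).
  exists A => [|C]; first exact: mem_head.
  rewrite inE => /predU1P[-> //|Cs AC].
  exact: subset_trans (Bmax C Cs (subset_trans BA AC)) BA.
exists B => [|C]; first by rewrite inE Bs orbT.
by rewrite inE => /predU1P[->|]; [|exact: Bmax].
Qed.

Lemma ex_maximal_finite_set (T : Type) (F : set (set T)) :
  finite_set F -> F !=set0 ->
  exists2 B, F B & forall C, F C -> B `<=` C -> C `<=` B.
Proof.
move=> /finite_seqP[s ->] [A]; case: s => [//|A' s] _.
have [B Bs Bmax] := @seq_ex_maximal T A' s.
by exists B => // C /Bmax.
Qed.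

Section PrimaryDecomposition.
Local Open Scope ring_scope.
Variables (Q : zmodType) (Qp : set Q).
Hypothesis hQ : positive_cone Qp.

Let cone0 : Qp 0. Proof. by case: hQ => -[]. Qed.
Let coneD a b : Qp a -> Qp b -> Qp (a + b). Proof. by case: hQ => -[_ QpD] _ _; apply: QpD. Qed.

Lemma downsetB (D : set Q) x a : downset Qp D -> D x -> Qp a -> D (x - a).
Proof. by move=> hD Dx Qa; rewrite -hD; exists x, a. Qed.

Lemma sub_minus_cone (X : set Q) : X `<=` minus_cone Qp X.
Proof. by move=> q Xq; exists q, 0; rewrite subr0. Qed.

Lemma minus_coneS (X Y : set Q) : X `<=` Y -> minus_cone Qp X `<=` minus_cone Qp Y.
Proof. by move=> XY _ [x [a [Xx Qa ->]]]; exists x, a; split => //; apply: XY. Qed.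

Lemma minus_cone_downset (X : set Q) : downset Qp (minus_cone Qp X).
Proof.
apply/seteqP; split=> [_ [_ [a [[x [b [Xx Qb ->]]] Qa ->]]]|]; last exact: sub_minus_cone.
by exists x, (b + a); rewrite opprD addrA; split => //; apply: coneD.
Qed.

Lemma minus_cone_sub (X D : set Q) :
  downset Qp D -> X `<=` D -> minus_cone Qp X `<=` D.
Proof. by move=> hD XD; rewrite -hD; apply: minus_coneS. Qed.

Lemma Dface_sub (tau D : set Q) : Dface tau D `<=` D.
Proof. by move=> q []. Qed.

Lemma DfaceS (tau X Y : set Q) : X `<=` Y -> Dface tau X `<=` Dface tau Y.
Proof. by move=> XY q [Xq Xqt]; split=> [|t /Xqt]; apply: XY. Qed.

Lemma Dface_downset (tau D : set Q) : downset Qp D -> downset Qp (Dface tau D).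
Proof.
move=> hD; apply/seteqP; split; last exact: sub_minus_cone.
move=> _ [x [a [[Dx Dxt] Qa ->]]]; split; first exact: downsetB.
by move=> t /Dxt Dxt'; rewrite addrAC; apply: downsetB.
Qed.

Lemma Gamma_restrict (tau X Y : set Q) :
  X `<=` Y -> X `&` Gamma Qp tau Y `<=` Gamma Qp tau X.
Proof.
move=> XY q [Xq [_ nYq]]; split=> // tau' ftau' ntau' /(DfaceS XY).
exact: nYq.
Qed.

Lemma primary_comp_sub (tau D : set Q) :
  downset Qp D -> primary_comp Qp tau D `<=` Dface tau D.
Proof. by move=> hD; apply: minus_cone_sub; [apply: Dface_downset | move=> q []]. Qed.

Lemma face0 : face Qp [set 0].
Proof.
split=> [|_ -> //|]; first by split=> // a b -> ->; rewrite addr0.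
split=> [a []//|a b [Qa a0] Qb]; split; first exact: coneD.
move=> /= /eqP; rewrite addr_eq0 => /eqP ab; apply: a0.
by case: hQ => _ unit0 _; apply: unit0; rewrite // ab opprK.
Qed.

Lemma Dface0 (D : set Q) : Dface [set 0] D = D.
Proof. by apply/seteqP; split=> [q []//|q Dq]; split=> // _ ->; rewrite addr0. Qed.

Definition face_join (tau tau' : set Q) : set Q :=
  [set a | Qp a /\ exists t s, [/\ tau t, tau' s & Qp (t + s - a)]].

Lemma face_join_face (tau tau' : set Q) :
  face Qp tau -> face Qp tau' -> face Qp (face_join tau tau').
Proof.
move=> [[tau0 tauD] _ _] [[tau'0 tau'D] _ _]; split=> [|a []//|].
  split; first by split; [exact: cone0 | exists 0, 0; rewrite addr0 subr0].
  move=> a b [Qa [t [s [tt ss Qa']]]] [Qb [t' [s' [tt' ss' Qb']]]].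
  split; first exact: coneD.
  exists (t + t'), (s + s'); split; [exact: tauD | exact: tau'D |].
  suff -> : t + t' + (s + s') - (a + b) = t + s - a + (t' + s' - b).
    exact: coneD.
  by rewrite addrACA [RHS]addrACA opprD.
split=> [a []//|a b [Qa naJ] Qb]; split; first exact: coneD.
move=> [_ [t [s [tt ss Qab]]]]; apply: naJ; split=> //; exists t, s; split=> //.
by move: (coneD Qab Qb); rewrite opprD addrA subrK.
Qed.

Lemma face_joinl (tau tau' : set Q) :
  face Qp tau -> face Qp tau' -> tau `<=` face_join tau tau'.
Proof.
move=> [_ tauQ _] [[tau'0 _] _ _] t tt; split; first exact: tauQ.
by exists t, 0; rewrite addr0 subrr.
Qed.

Lemma face_joinr (tau tau' : set Q) :
  face Qp tau -> face Qp tau' -> tau' `<=` face_join tau tau'.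
Proof.
move=> [[tau0 _] _ _] [_ tau'Q _] s ss; split; first exact: tau'Q.
by exists 0, s; rewrite add0r subrr.
Qed.

Lemma Dface_face_join (D tau tau' : set Q) q : downset Qp D ->
  Dface tau' (Dface tau D) q -> Dface (face_join tau tau') D q.
Proof.
move=> hD [[Dq _] Dqs]; split=> // a [_ [t [s [tt ss Qa]]]].
have -> : q + a = q + s + t - (t + s - a).
  by rewrite opprB addrCA [t + s]addrC -(addrA q) addrK addrC.
by apply: downsetB => //; have [_] := Dqs s ss; apply.
Qed.

Lemma Gamma_Dface_maximal (D tau : set Q) q : downset Qp D -> face Qp tau ->
  (forall sigma, face Qp sigma -> Dface sigma D q -> tau `<=` sigma -> sigma `<=` tau) ->
  Dface tau D q -> Gamma Qp tau (Dface tau D) q.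
Proof.
move=> hD ftau tau_max Dq; split=> // tau' ftau' ntau' /(Dface_face_join hD) Djq.
apply/ntau'/(subset_trans (face_joinr ftau ftau')).
exact: tau_max (face_join_face ftau ftau') Djq (face_joinl ftau ftau').
Qed.

Lemma ex_Gamma_Dface (D : set Q) q : polyhedral Qp -> downset Qp D -> D q ->
  exists2 tau, face Qp tau & Gamma Qp tau (Dface tau D) q.
Proof.
move=> hpoly hD Dq; pose F := [set sigma | face Qp sigma /\ Dface sigma D q].
have finF : finite_set F by apply: sub_finite_set hpoly => sigma [].
have F0 : F [set 0] by split; [exact: face0 | rewrite Dface0].
have [tau [ftau Dq_tau] tau_max] := ex_maximal_finite_set finF (ex_intro _ _ F0).
exists tau => //; apply: Gamma_Dface_maximal => // sigma fsigma Dq_sigma.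
exact: tau_max.
Qed.

Lemma Gamma_DfaceD (D tau : set Q) q t : downset Qp D -> face Qp tau ->
  Gamma Qp tau (Dface tau D) q -> tau t -> Gamma Qp tau (Dface tau D) (q + t).
Proof.
move=> hD [[_ tauD] tauQ _] [[Dq Dqt] nq] tt; split.
  by split=> [|t' tt']; [exact: Dqt | rewrite -addrA; apply/Dqt/tauD].
move=> tau' ftau' ntau' [_ Dqts]; apply: nq ftau' ntau' _; split=> [|s ss]; first by split.
rewrite -(addrK t (q + s)) [q + s + t]addrAC.
by apply: (downsetB (Dface_downset tau hD)); [exact: Dqts | exact: tauQ].
Qed.

Lemma primary_comp_idem (D tau : set Q) : downset Qp D -> face Qp tau ->
  primary_comp Qp tau (primary_comp Qp tau D) = primary_comp Qp tau D.
Proof.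
move=> hD ftau; set E := primary_comp Qp tau D.
have hE : downset Qp E := minus_cone_downset _.
have ED : E `<=` Dface tau D := primary_comp_sub hD.
apply/seteqP; split=> [q /(primary_comp_sub hE)/Dface_sub//|].
apply: minus_coneS => q Gq.
apply: (Gamma_restrict (DfaceS (subset_trans ED (@Dface_sub _ _)))).
split=> //; split=> [|t tt]; apply: sub_minus_cone => //.
exact: Gamma_DfaceD.
Qed.

End PrimaryDecomposition.

Theorem corollary3p11 (Q : zmodType) (Qp : set Q)
  (hQ : positive_cone Qp) (hpoly : polyhedral Qp)
  (D : set Q) (hD : downset Qp D) :
  D = \bigcup_(tau in [set tau : set Q |
                        face Qp tau /\ Gamma Qp tau (Dface tau D) !=set0])
        primary_comp Qp tau D
  /\ (forall tau : set Q, face Qp tau -> Gamma Qp tau (Dface tau D) !=set0 ->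
        coprimary Qp (primary_comp Qp tau D)).
Proof.
split=> [|tau ftau _]; last first.
  by split; [exact: minus_cone_downset | exists tau; rewrite primary_comp_idem].
apply/seteqP; split=> [q Dq|q [tau _ /(primary_comp_sub hQ hD)/Dface_sub//]].
have [tau ftau Gq] := ex_Gamma_Dface hQ hpoly hD Dq.
by exists tau; [split=> //; exists q | exact: sub_minus_cone].
Qed.
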